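(* Let $f:\mathbb{R}^n\to\mathbb{R}$ be convex and differentiable, and let $x_*$ be a minimizer of $f$ on $\mathbb{R}^n$, $f_*=f(x_* )$. Fix a starting point $x^0\in\mathbb{R}^n$ and put $R=\|x^0-x_*\|_2$, $B_R(x_* )=\{x:\|x-x_*\|_2\le R\}$. Assume that for some $L>0$ $$\|\nabla f(y)-\nabla f(x)\|_2\le L\|y-x\|_2\quad\text{for all } x,y\in B_R(x_* ).$$ Consider the fast gradient method (FGM) with $x^0=y^0=z^0$ and, for $k=0,1,\dots$, $$x^{k+1}=\tau_k z^k+(1-\tau_k)y^k,\qquad y^{k+1}=x^{k+1}-\tfrac1L\nabla f(x^{k+1}),\qquad z^{k+1}=z^k-\alpha_{k+1}\nabla f(x^{k+1}),$$ where $\alpha_{k+1}=\frac{k+2}{2L}$ and $\tau_k=\frac{2}{k+2}$. Then for every $N\ge1$ the generated points satisfy $$\max\{\|x^k-x_*\|_2,\|y^k-x_*\|_2,\|z^k-x_*\|_2\}\le\|x^0-x_*\|_2,\qquad k=0,\dots,N,$$ and, with $$\bar y^N=\frac{1}{N(N+3)}\Big(\sum_{k=1}^{N-1}y^k+(N+1)^2y^N\Big),$$ one has $$f(\bar y^N)\le\frac{4L}{N(N+3)}\min_{x\in\mathbb{R}^n}\Big\{\sum_{k=0}^{N-1}\frac{k+2}{2L}\big\{f(x^{k+1})+\langle\nabla f(x^{k+1}),x-x^{k+1}\rangle\big\}+\frac12\|z^0-x\|_2^2\Big\},$$ and consequently $$f(\bar y^N)-f_*\le\frac{2L\|z^0-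x_*\|_2^2}{N(N+3)}\le\frac{2LR^2}{(N+1)^2}.$$
   Context: $\|\cdot\|_2$ is the Euclidean norm. The step sizes $\alpha_{k+1}=\frac{k+2}{2L}$, $\tau_k=\frac{2}{k+2}$ are the solution of $\alpha_1=1/L$, $\alpha_k^2L=\alpha_{k+1}^2L-\alpha_{k+1}+\frac{1}{4L}$, $\tau_k=\frac{1}{\alpha_{k+1}L}$. *)

From HB Require Import structures.
From mathcomp Require Import all_boot all_order all_algebra.
From mathcomp Require Import all_classical all_reals all_analysis.
Set Implicit Arguments. Unset Strict Implicit. Unset Printing Implicit Defensive.
Import Order.TTheory GRing.Theory Num.Theory.
Import numFieldNormedType.Exports.
Local Open Scope ring_scope.

Definition dotv {R : realType} {n : nat} (u v : 'rV[R]_n) : R :=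
  \sum_(i < n) u ord0 i * v ord0 i.
Definition enorm {R : realType} {n : nat} (u : 'rV[R]_n) : R :=
  Num.sqrt (dotv u u).

Definition convex_fun {R : realType} {n : nat} (f : 'rV[R]_n -> R) : Prop :=
  forall (x y : 'rV[R]_n) (t : R), 0 <= t <= 1 ->
    f (t *: x + (1 - t) *: y) <= t * f x + (1 - t) * f y.

Definition has_gradient {R : realType} {n : nat}
    (f : 'rV[R]_n -> R) (gf : 'rV[R]_n -> 'rV[R]_n) : Prop :=
  forall x : 'rV[R]_n, differentiable f x /\ forall v, 'd f x v = dotv (gf x) v.

Fixpoint fgm {R : realType} {n : nat} (L : R) (gf : 'rV[R]_n -> 'rV[R]_n)
    (x0 : 'rV[R]_n) (k : nat) : 'rV[R]_n * 'rV[R]_n * 'rV[R]_n :=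
  match k with
  | 0 => (x0, x0, x0)
  | k'.+1 =>
      let '(_, y, z) := fgm L gf x0 k' in
      let tau : R := 2 / (k'%:R + 2) in
      let alpha : R := (k'%:R + 2) / (2 * L) in
      let xn := tau *: z + (1 - tau) *: y in
      (xn, xn - L^-1 *: gf xn, z - alpha *: gf xn)
  end.

Definition fgm_x {R : realType} {n : nat} L gf (x0 : 'rV[R]_n) k := (fgm L gf x0 k).1.1.
Definition fgm_y {R : realType} {n : nat} L gf (x0 : 'rV[R]_n) k := (fgm L gf x0 k).1.2.
Definition fgm_z {R : realType} {n : nat} L gf (x0 : 'rV[R]_n) k := (fgm L gf x0 k).2.

Definition fgm_ybar {R : realType} {n : nat} L gf (x0 : 'rV[R]_n) (N : nat) : 'rV[R]_n :=
  (N%:R * (N%:R + 3))^-1 *: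
    (\sum_(1 <= k < N) fgm_y L gf x0 k + (N%:R + 1) ^+ 2 *: fgm_y L gf x0 N).

Definition fgm_model {R : realType} {n : nat} (f : 'rV[R]_n -> R) L gf
    (x0 : 'rV[R]_n) (N : nat) (x : 'rV[R]_n) : R :=
  \sum_(0 <= k < N)
     ((k%:R + 2) / (2 * L)) *
       (f (fgm_x L gf x0 k.+1) + dotv (gf (fgm_x L gf x0 k.+1)) (x - fgm_x L gf x0 k.+1))
  + 2^-1 * enorm (fgm_z L gf x0 0 - x) ^+ 2.

From HB Require Import structures.
From mathcomp Require Import all_boot all_order all_algebra.
From mathcomp Require Import all_classical all_reals all_analysis.
From mathcomp Require Import ring lra.
Import Order.TTheory GRing.Theory Num.Theory.
Import numFieldNormedType.Exports.
Local Open Scope ring_scope.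

(* The gradient is only L-Lipschitz on the ball B = B_R(x_* ), so everything rests
   on the iterates never leaving B.  On B the descent lemma holds along segments, and
   comparing f(p - s grad f(p)) with f(x_* ) for the largest admissible step s gives the
   local co-coercivity |grad f(p)|^2 <= 2L <grad f(p), p - x_*>.  Hence a gradient step
   from p in B stays in B and decreases f by |grad f(p)|^2/(2L).  With this, every FGM
   step satisfies the estimate-sequence inequality, which telescopes to
     ((N+1)^2 f(y^N) + sum_(1<=k<N) f(y^k)) / (4L) + |z^N - u|^2/2 <= model_N(u).
   At u = x_* , convexity bounds the model by the same weights times f_* plus R^2/2, so
   |z^N - x_*| <= R, and x^(N+1), y^N follow as convex combinations: this is the
   induction keeping all iterates in B.  At u = z^N, the minimizer of the quadratic
   model, Jensen's inequality for the weighted average ybar^N gives the rate. *)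

Section InnerProduct.
Context {R : realType} {n : nat}.
Implicit Types (u v w : 'rV[R]_n) (a : R).

Lemma dotvC u v : dotv u v = dotv v u.
Proof. by apply: eq_bigr => i _; rewrite mulrC. Qed.

Lemma dotvDl u v w : dotv (u + v) w = dotv u w + dotv v w.
Proof. by rewrite /dotv -big_split; apply: eq_bigr => i _; rewrite !mxE mulrDl. Qed.

Lemma dotvZl a u v : dotv (a *: u) v = a * dotv u v.
Proof. by rewrite /dotv mulr_sumr; apply: eq_bigr => i _; rewrite !mxE mulrA. Qed.

Lemma dotvNl u v : dotv (- u) v = - dotv u v.
Proof. by rewrite -scaleN1r dotvZl mulN1r. Qed.

Lemma dotvBl u v w : dotv (u - v) w = dotv u w - dotv v w.
Proof. by rewrite dotvDl dotvNl. Qed.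

Lemma dotvDr u v w : dotv w (u + v) = dotv w u + dotv w v.
Proof. by rewrite dotvC dotvDl !(dotvC w). Qed.

Lemma dotvZr a u v : dotv v (a *: u) = a * dotv v u.
Proof. by rewrite dotvC dotvZl dotvC. Qed.

Lemma dotvNr u v : dotv v (- u) = - dotv v u.
Proof. by rewrite !(dotvC v) dotvNl. Qed.

Lemma dotvBr u v w : dotv w (u - v) = dotv w u - dotv w v.
Proof. by rewrite !(dotvC w) dotvBl. Qed.

Lemma dotv0r u : dotv u 0 = 0.
Proof. by rewrite -(scale0r 0) dotvZr mul0r. Qed.

Lemma dotv_sumr (I : Type) (r : seq I) (P : pred I) (F : I -> 'rV[R]_n) u :
  dotv u (\sum_(i <- r | P i) F i) = \sum_(i <- r | P i) dotv u (F i).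
Proof. by apply: (big_morph (dotv u)) => [v w|]; [exact: dotvDr | exact: dotv0r]. Qed.

Lemma dotvv_ge0 u : 0 <= dotv u u.
Proof. by apply: sumr_ge0 => i _; rewrite -expr2 sqr_ge0. Qed.

(* Lagrange's identity: the defect is half of sum_(i,j) (u_i v_j - u_j v_i)^2. *)
Lemma dotv_sqr_le u v : dotv u v ^+ 2 <= dotv u u * dotv v v.
Proof.
pose S := \sum_i \sum_j (u 0 i * u 0 i * (v 0 j * v 0 j) - u 0 i * v 0 i * (u 0 j * v 0 j)).
have defS : dotv u u * dotv v v - dotv u v ^+ 2 = S.
  rewrite expr2 /dotv !mulr_suml -sumrB; apply: eq_bigr => i _.
  by rewrite !mulr_sumr -sumrB.
have symS : S =
    \sum_i \sum_j (u 0 j * u 0 j * (v 0 i * v 0 i) - u 0 j * v 0 j * (u 0 i * v 0 i)).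
  exact: exchange_big.
have : 0 <= S + S.
  rewrite {2}symS -big_split; apply: sumr_ge0 => i _.
  rewrite -big_split; apply: sumr_ge0 => j _ /=.
  have -> : forall a b c d : R,
      a * a * (b * b) - a * c * (d * b) + (d * d * (c * c) - d * b * (a * c))
      = (a * b - d * c) ^+ 2 by move=> a b c d; ring.
  exact: sqr_ge0.
by rewrite -defS; lra.
Qed.

Lemma enorm_ge0 u : 0 <= enorm u.
Proof. exact: sqrtr_ge0. Qed.

Lemma enorm_sqr u : enorm u ^+ 2 = dotv u u.
Proof. by rewrite sqr_sqrtr // dotvv_ge0. Qed.

Lemma enorm0 : enorm (0 : 'rV[R]_n) = 0.
Proof. by rewrite /enorm dotv0r sqrtr0. Qed.

Lemma enorm_leE u v : (enorm u <= enorm v) = (enorm u ^+ 2 <= enorm v ^+ 2).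
Proof. by rewrite ler_sqr ?nnegrE ?enorm_ge0. Qed.

Lemma enormZ a u : enorm (a *: u) = `|a| * enorm u.
Proof. by rewrite /enorm dotvZl dotvZr mulrA -expr2 sqrtrM ?sqr_ge0 // sqrtr_sqr. Qed.

Lemma enorm_sqrZ a u : enorm (a *: u) ^+ 2 = a ^+ 2 * enorm u ^+ 2.
Proof. by rewrite !enorm_sqr dotvZl dotvZr mulrA -expr2. Qed.

Lemma enorm_sqrD u v : enorm (u + v) ^+ 2 = enorm u ^+ 2 + 2 * dotv u v + enorm v ^+ 2.
Proof. rewrite !enorm_sqr dotvDl !dotvDr (dotvC v u); ring. Qed.

Lemma dotv_le_enorm u v : dotv u v <= enorm u * enorm v.
Proof.
apply: le_trans (ler_norm _) _.
rewrite -ler_sqr ?nnegrE ?mulr_ge0 ?enorm_ge0 // real_normK ?num_real //.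
by rewrite exprMn !enorm_sqr dotv_sqr_le.
Qed.

Lemma enormD u v : enorm (u + v) <= enorm u + enorm v.
Proof.
rewrite -ler_sqr ?nnegrE ?addr_ge0 ?enorm_ge0 // enorm_sqrD sqrrD lerD2r lerD2l.
by have := dotv_le_enorm u v; lra.
Qed.

Lemma ball_convex (c : 'rV[R]_n) (rho t : R) u v : 0 <= t <= 1 ->
  enorm (u - c) <= rho -> enorm (v - c) <= rho ->
  enorm (t *: u + (1 - t) *: v - c) <= rho.
Proof.
case/andP=> t0 t1 uc vc.
have -> : t *: u + (1 - t) *: v - c = t *: (u - c) + (1 - t) *: (v - c).
  by apply/rowP => i; rewrite !mxE; ring.
apply: le_trans (enormD _ _) _; rewrite !enormZ !ger0_norm ?subr_ge0 //.
nra.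
Qed.

End InnerProduct.

Section Gradient.
Context {R : realType} {n : nat}.
Context {f : 'rV[R]_n -> R} {gf : 'rV[R]_n -> 'rV[R]_n}.
Hypothesis f_grad : has_gradient f gf.

Lemma grad_quotient_cvg x d :
  ((fun r : R => r^-1 * (f (x + r *: d) - f x)) @ 0^'+ --> dotv (gf x) d)%classic.
Proof.
have [fx dfE] := f_grad x.
rewrite -dfE -deriveE //.
rewrite (@eq_cvg _ _ _ _ (fun r => r^-1 *: ((f \o shift x) (r *: d) - f x))).
  exact/cvg_dnbhs_at_right/diff_derivable.
by move=> r /=; rewrite [r *: d + x]addrC.
Qed.

Lemma grad_dir_le x d C :
  (forall r, 0 < r < 1 -> f (x + r *: d) - f x <= r * C) -> dotv (gf x) d <= C.
Proof.
move=> bound; apply: (closed_cvg _ (@closed_le _ C) _ _ (grad_quotient_cvg x d)).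
near=> r; rewrite /= ler_pdivrMl; last by near: r; exact: nbhs_right_gt.
apply: bound; apply/andP; split; near: r; [exact: nbhs_right_gt | exact: nbhs_right_lt].
Unshelve. all: by end_near. Qed.

Lemma grad_dir_ge x d C :
  (forall r, 0 < r < 1 -> r * C <= f (x + r *: d) - f x) -> C <= dotv (gf x) d.
Proof.
move=> bound; apply: (closed_cvg _ (@closed_ge _ C) _ _ (grad_quotient_cvg x d)).
near=> r; rewrite /= ler_pdivlMl; last by near: r; exact: nbhs_right_gt.
apply: bound; apply/andP; split; near: r; [exact: nbhs_right_gt | exact: nbhs_right_lt].
Unshelve. all: by end_near. Qed.

Lemma convex_grad_le (f_convex : convex_fun f) x y : f x + dotv (gf x) (y - x) <= f y.
Proof.
rewrite addrC -lerBrDr; apply: grad_dir_le => r /andP[r0 r1].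
have -> : x + r *: (y - x) = r *: y + (1 - r) *: x.
  by rewrite scalerBr scalerBl scale1r addrCA addrA.
by have := f_convex y x r; rewrite (ltW r0) (ltW r1) => /(_ isT); lra.
Qed.

Lemma dotv_grad_eq0_at_min {x : 'rV[R]_n} :
  (forall y, f x <= f y) -> forall d, dotv (gf x) d = 0.
Proof.
have ge0 d : (forall y, f x <= f y) -> 0 <= dotv (gf x) d.
  by move=> xmin; apply: grad_dir_ge => r _; rewrite mulr0 subr_ge0.
move=> xmin d; apply/eqP; rewrite eq_le ge0 // andbT.
by rewrite -oppr_ge0 -dotvNr ge0.
Qed.

Lemma convex_grad_jensen (f_convex : convex_fun f) {I : Type} (r : seq I)
    (w : I -> R) (y : I -> 'rV[R]_n) (yb : 'rV[R]_n) :
  (forall i, 0 <= w i) -> (\sum_(i <- r) w i) *: yb = \sum_(i <- r) w i *: y i ->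
  (\sum_(i <- r) w i) * f yb <= \sum_(i <- r) w i * f (y i).
Proof.
move=> w_ge0 bary.
have : \sum_(i <- r) w i * (f yb + dotv (gf yb) (y i - yb)) <= \sum_(i <- r) w i * f (y i).
  by apply: ler_sum => i _; rewrite ler_wpM2l // convex_grad_le.
under eq_bigr do rewrite mulrDr -dotvZr.
rewrite big_split /= -dotv_sumr -mulr_suml.
have -> : \sum_(i <- r) w i *: (y i - yb) = 0.
  by rewrite (eq_bigr _ (fun i _ => scalerBr _ _ _)) sumrB -scaler_suml bary subrr.
by rewrite dotv0r addr0.
Qed.

Lemma derive_along (p d : 'rV[R]_n) (t : R) :
  is_derive t 1 (fun s => f (p + s *: d)) (dotv (gf (p + t *: d)) d).
Proof.
set q := p + t *: d.
have E : (fun r : R => r^-1 *: (((fun s => f (p + s *: d)) \o shift t) (r *: 1) - f q))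
    = (fun r : R => r^-1 *: ((f \o shift q) (r *: d) - f q)).
  apply/funext => r /=; congr (_ *: (_ - _)); congr f.
  by rewrite /q [r *: 1]mulr1 scalerDl addrCA.
have [fq dfE] := f_grad q.
split; first by rewrite /derivable E; exact: diff_derivable.
by rewrite /derive E -dfE; exact: deriveE.
Qed.

Lemma descent {S : 'rV[R]_n -> Prop} {L : R} {p d : 'rV[R]_n} :
  (forall x y, S x -> S y -> enorm (gf y - gf x) <= L * enorm (y - x)) ->
  (forall t, 0 <= t <= 1 -> S (p + t *: d)) ->
  f (p + d) <= f p + dotv (gf p) d + L / 2 * enorm d ^+ 2.
Proof.
move=> lip seg.
set c1 := dotv (gf p) d; set c2 := L / 2 * enorm d ^+ 2.
pose k : R -> R := (fun s => f (p + s *: d)) - (c1 \*: id) - (c2 \*: id ^+ 2).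
pose dk s := dotv (gf (p + s *: d)) d - c1 - c2 * (2 * s).
have k_deriv (s : R) : is_derive s (1 : R) k (dk s).
  apply: is_derive_eq.
    by apply: is_deriveB; first apply: is_deriveB; exact: derive_along.
  by rewrite /dk /= [c1%:A]mulr1 [(2 * s)%:A]mulr1.
have dk_le0 (s : R) : 0 < s < 1 -> dk s <= 0.
  case/andP=> s0 s1; have Sp : S p by have := seg 0; rewrite scale0r addr0 lexx ler01; apply.
  have Sq : S (p + s *: d) by apply: seg; rewrite (ltW s0) (ltW s1).
  have := ler_wpM2r (enorm_ge0 d) (lip _ _ Sp Sq).
  move=> /(le_trans (dotv_le_enorm (gf (p + s *: d) - gf p) d)).
  rewrite dotvBl -/c1 addrAC subrr add0r enormZ (ger0_norm (ltW s0)) /dk /c2.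
  lra.
have k_cont : {within `[0, 1], continuous k}%classic.
  by apply: derivable_within_continuous => s _; case: (k_deriv s).
have [s s01 k10] := MVT ltr01 (fun s _ => k_deriv s) k_cont.
have : k 1 - k 0 <= 0 by rewrite k10 subr0 mulr1 dk_le0.
have kE r : k r = f (p + r *: d) - c1 * r - c2 * (r * r) by [].
by rewrite !kE scale0r scale1r addr0 !mulr0 !mulr1; lra.
Qed.

End Gradient.

Section LocalSmoothness.
Context {R : realType} {n : nat}.
Context {f : 'rV[R]_n -> R} {gf : 'rV[R]_n -> 'rV[R]_n} {xs : 'rV[R]_n} {rho L : R}.
Hypotheses (f_convex : convex_fun f) (f_grad : has_gradient f gf).
Hypotheses (xs_min : forall x, f xs <= f x) (L_gt0 : 0 < L).
Hypothesis grad_lip : forall x y, enorm (x - xs) <= rho -> enorm (y - xs) <= rho ->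
  enorm (gf y - gf x) <= L * enorm (y - x).

Local Notation in_ball x := (enorm (x - xs) <= rho).

Lemma grad_segment_in_ball {p s} : in_ball p -> 0 <= s ->
  s * enorm (gf p) ^+ 2 <= 2 * dotv (gf p) (p - xs) ->
  forall t, 0 <= t <= 1 -> in_ball (p + t *: (- s *: gf p)).
Proof.
move=> pB s0 sG t /andP[t0 t1]; apply: le_trans pB; rewrite enorm_leE.
have -> : p + t *: (- s *: gf p) - xs = (p - xs) + (- (t * s)) *: gf p.
  by rewrite scalerA mulrN addrAC.
rewrite enorm_sqrD dotvZr enorm_sqrZ sqrrN (dotvC (p - xs)).
have c0 : 0 <= dotv (gf p) (p - xs).
  by rewrite -(pmulr_rge0 _ (ltr0Sn _ 1)); apply: le_trans sG; rewrite mulr_ge0 ?sqr_ge0.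
have : 0 <= t * (1 - t) * s * dotv (gf p) (p - xs) by rewrite !mulr_ge0 ?subr_ge0.
have : t * (t * s * (s * enorm (gf p) ^+ 2)) <= t * (t * s * (2 * dotv (gf p) (p - xs))).
  by rewrite ler_wpM2l // ler_wpM2l ?mulr_ge0.
nra.
Qed.

Lemma grad_step_le {p s} : in_ball p -> 0 <= s ->
  s * enorm (gf p) ^+ 2 <= 2 * dotv (gf p) (p - xs) ->
  f (p - s *: gf p) <= f p - s * enorm (gf p) ^+ 2 + L / 2 * s ^+ 2 * enorm (gf p) ^+ 2.
Proof.
move=> pB s0 sG.
have := descent f_grad grad_lip (grad_segment_in_ball pB s0 sG).
by rewrite dotvZr enorm_sqrZ sqrrN -enorm_sqr scaleNr; lra.
Qed.

Lemma grad_sqr_le p : in_ball p -> enorm (gf p) ^+ 2 <= 2 * L * dotv (gf p) (p - xs).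
Proof.
move=> pB; set G := enorm (gf p) ^+ 2; set c := dotv (gf p) (p - xs).
have gap : f p - f xs <= c.
  by have := convex_grad_le f_grad f_convex p xs; rewrite -[xs - p]opprB dotvNr -/c; lra.
have c_ge0 : 0 <= c by have := xs_min p; lra.
have [c0|c_neq0] := eqVneq c 0.
  have p_min y : f p <= f y by have := xs_min y; lra.
  by rewrite /G enorm_sqr (dotv_grad_eq0_at_min f_grad p_min) c0 mulr0.
have [G0|G_neq0] := eqVneq G 0; first by rewrite G0 !mulr_ge0 // ltW.
have c_gt0 : 0 < c by rewrite lt_def c_neq0.
have G_gt0 : 0 < G by rewrite lt_def G_neq0 sqr_ge0.
(* The step [1/L] is not yet known to keep the segment in the ball, but the
   longest step [s] allowed by [grad_segment_in_ball] is, and it forces [1 <= L s]. *)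
pose s := 2 * c / G.
have sG : s * G = 2 * c by rewrite divfK.
have s_ge0 : 0 <= s by rewrite divr_ge0 ?ltW // mulr_gt0.
have Ls_ge1 : 1 <= L * s.
  have := grad_step_le pB s_ge0; rewrite -/G -/c sG lexx => /(_ isT).
  have -> : L / 2 * s ^+ 2 * G = L / 2 * s * (s * G) by ring.
  rewrite sG -(ler_pM2r c_gt0) mul1r; have := xs_min (p - s *: gf p); lra.
by have := ler_wpM2r (ltW G_gt0) Ls_ge1; rewrite mul1r -[L * s * G]mulrA sG; lra.
Qed.

Lemma grad_step_descent p : in_ball p ->
  f (p - L^-1 *: gf p) <= f p - enorm (gf p) ^+ 2 / (2 * L).
Proof.
move=> pB; have Linv_ge0 : 0 <= L^-1 by rewrite invr_ge0 ltW.
have sG : L^-1 * enorm (gf p) ^+ 2 <= 2 * dotv (gf p) (p - xs).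
  by rewrite ler_pdivrMl // mulrA [L * 2]mulrC grad_sqr_le.
apply: le_trans (grad_step_le pB Linv_ge0 sG) _.
have -> : L / 2 * L^-1 ^+ 2 * enorm (gf p) ^+ 2 = enorm (gf p) ^+ 2 / (2 * L).
  by field; rewrite gt_eqF.
have -> : L^-1 * enorm (gf p) ^+ 2 = 2 * (enorm (gf p) ^+ 2 / (2 * L)).
  by field; rewrite gt_eqF.
lra.
Qed.

End LocalSmoothness.

(* The coupling hypothesis is [x = tau z + (1 - tau) y] with [tau = 1 / (a L)]. *)
Lemma estimate_sequence_step {R : realType} {n : nat} {L a fx fy fy' : R}
    {x y z u g : 'rV[R]_n} :
  0 < L -> 1 <= a * L -> x - z = (a * L - 1) *: (y - x) ->
  fy' <= fx - enorm g ^+ 2 / (2 * L) -> fx + dotv g (y - x) <= fy ->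
  a ^+ 2 * L * fy' - (a ^+ 2 * L - a) * fy + 2^-1 * enorm (z - a *: g - u) ^+ 2
    <= a * (fx + dotv g (u - x)) + 2^-1 * enorm (z - u) ^+ 2.
Proof.
move=> L_gt0 aL_ge1 coupling fy'_le grad_le.
have a_ge0 : 0 <= a by rewrite -(pmulr_lge0 _ L_gt0); apply: le_trans aL_ge1.
have -> : z - a *: g - u = (z - u) + (- a) *: g.
  by apply/rowP => i; rewrite !mxE; ring.
have -> : u - x = - (x - z) - (z - u) by apply/rowP => i; rewrite !mxE; ring.
rewrite coupling enorm_sqrD enorm_sqrZ sqrrN dotvZr dotvBr dotvNr dotvZr (dotvC (z - u)).
have D := ler_wpM2l (mulr_ge0 (sqr_ge0 a) (ltW L_gt0)) fy'_le.
have aL1_ge0 : 0 <= a * L - 1 by rewrite subr_ge0.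
have C := ler_wpM2l (mulr_ge0 a_ge0 aL1_ge0) grad_le.
have E : a ^+ 2 * L * (enorm g ^+ 2 / (2 * L)) = a ^+ 2 * enorm g ^+ 2 / 2.
  by field; rewrite gt_eqF.
rewrite mulrBr E in D.
lra.
Qed.

(* [fgm_values N / (4 L) + |z^N - u|^2 / 2] is the potential of the estimate-sequence
   argument; its weights sum to [sum_(k < N) alpha_(k+1) = N (N + 3) / (4 L)]. *)
Definition fgm_values {R : realType} {n : nat} (f : 'rV[R]_n -> R) (L : R)
    (gf : 'rV[R]_n -> 'rV[R]_n) (x0 : 'rV[R]_n) (N : nat) : R :=
  (N%:R + 1) ^+ 2 * f (fgm_y L gf x0 N) + \sum_(1 <= j < N) f (fgm_y L gf x0 j).

Section FastGradientMethod.
Context {R : realType} {n : nat}.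
Context {f : 'rV[R]_n -> R} {gf : 'rV[R]_n -> 'rV[R]_n} {xs x0 : 'rV[R]_n} {L : R}.
Hypotheses (f_convex : convex_fun f) (f_grad : has_gradient f gf).
Hypotheses (xs_min : forall x, f xs <= f x) (L_gt0 : 0 < L).
Hypothesis grad_lip : forall x y,
  enorm (x - xs) <= enorm (x0 - xs) -> enorm (y - xs) <= enorm (x0 - xs) ->
  enorm (gf y - gf x) <= L * enorm (y - x).

Local Notation in_ball x := (enorm (x - xs) <= enorm (x0 - xs)).
Local Notation X := (fgm_x L gf x0).
Local Notation Y := (fgm_y L gf x0).
Local Notation Z := (fgm_z L gf x0).
Local Notation tau k := (2 / (k%:R + 2) : R).
Local Notation alpha k := ((k%:R + 2) / (2 * L) : R).
Local Notation model := (fgm_model f L gf x0).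
Local Notation values := (fgm_values f L gf x0).

Lemma fgm_xS k : X k.+1 = tau k *: Z k + (1 - tau k) *: Y k.
Proof. by rewrite /fgm_x /fgm_y /fgm_z /=; case: fgm => [[]]. Qed.

Lemma fgm_yS k : Y k.+1 = X k.+1 - L^-1 *: gf (X k.+1).
Proof. by rewrite /fgm_x /fgm_y /=; case: fgm => [[]]. Qed.

Lemma fgm_zS k : Z k.+1 = Z k - alpha k *: gf (X k.+1).
Proof. by rewrite /fgm_x /fgm_z /=; case: fgm => [[]]. Qed.

Lemma tau_ge0_le1 k : 0 <= tau k <= 1.
Proof.
have k2 : (0 : R) < k%:R + 2 by rewrite ltr_wpDl.
by rewrite divr_ge0 ?(ltW k2) //= ler_pdivrMr // mul1r lerDr.
Qed.

Lemma fgm_yS_convex k : Y k.+1 = tau k *: Z k.+1 + (1 - tau k) *: Y k.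
Proof.
have k2 : (k%:R + 2 : R) != 0 by rewrite gt_eqF // ltr_wpDl.
rewrite fgm_yS fgm_zS fgm_xS; set g := gf _.
by apply/rowP => i; rewrite !mxE; field; rewrite k2 gt_eqF.
Qed.

Lemma fgm_coupling k : X k.+1 - Z k = (alpha k * L - 1) *: (Y k - X k.+1).
Proof.
have k2 : (k%:R + 2 : R) != 0 by rewrite gt_eqF // ltr_wpDl.
by rewrite fgm_xS; apply/rowP => i; rewrite !mxE; field; rewrite k2 gt_eqF.
Qed.

Lemma fgm_xS_in_ball k : in_ball (Y k) -> in_ball (Z k) -> in_ball (X k.+1).
Proof. by move=> yB zB; rewrite fgm_xS; apply: ball_convex => //; exact: tau_ge0_le1. Qed.

Lemma fgm_step k u : in_ball (Y k) -> in_ball (Z k) ->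
  ((k.+1%:R + 1) ^+ 2 * f (Y k.+1) - ((k%:R + 1) ^+ 2 - 1) * f (Y k)) / (4 * L)
    + 2^-1 * enorm (Z k.+1 - u) ^+ 2
  <= alpha k * (f (X k.+1) + dotv (gf (X k.+1)) (u - X k.+1))
    + 2^-1 * enorm (Z k - u) ^+ 2.
Proof.
move=> yB zB.
have k2 : (0 : R) < k%:R + 2 by rewrite ltr_wpDl.
have aL_ge1 : 1 <= alpha k * L.
  have -> : alpha k * L = (k%:R + 2) / 2 by field; rewrite gt_eqF.
  by rewrite ler_pdivlMr // mul1r lerDr.
have y_descent : f (Y k.+1) <= f (X k.+1) - enorm (gf (X k.+1)) ^+ 2 / (2 * L).
  rewrite fgm_yS; apply: (grad_step_descent f_convex f_grad xs_min L_gt0 grad_lip).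
  exact: fgm_xS_in_ball.
have := estimate_sequence_step (u := u) L_gt0 aL_ge1 (fgm_coupling k) y_descent
  (convex_grad_le f_grad f_convex _ (Y k)).
rewrite -fgm_zS.
have -> // : ((k.+1%:R + 1) ^+ 2 * f (Y k.+1) - ((k%:R + 1) ^+ 2 - 1) * f (Y k)) / (4 * L)
  = alpha k ^+ 2 * L * f (Y k.+1) - (alpha k ^+ 2 * L - alpha k) * f (Y k).
by rewrite -natr1; field; rewrite gt_eqF.
Qed.

Lemma fgm_values_le_model N u : (0 < N)%N ->
  (forall j, (j < N)%N -> in_ball (Y j) /\ in_ball (Z j)) ->
  values N / (4 * L) + 2^-1 * enorm (Z N - u) ^+ 2 <= model N u.
Proof.
elim: N => [//|[|m] IH] _ ball.
  have [yB zB] := ball 0%N isT.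
  have := fgm_step 0 u yB zB.
  by rewrite /fgm_values /fgm_model big_geq // big_nat1 add0r expr1n subrr mul0r subr0 addr0.
have [yB zB] := ball m.+1 (ltnSn _).
have := fgm_step m.+1 u yB zB.
have := IH isT (fun j jm => ball j (ltnW jm)).
have -> : model m.+2 u
    = model m.+1 u + alpha m.+1 * (f (X m.+2) + dotv (gf (X m.+2)) (u - X m.+2)).
  by rewrite /fgm_model big_nat_recr //= addrAC.
have -> : values m.+2 / (4 * L) = values m.+1 / (4 * L)
    + ((m.+2%:R + 1) ^+ 2 * f (Y m.+2) - ((m.+1%:R + 1) ^+ 2 - 1) * f (Y m.+1)) / (4 * L).
  by rewrite /fgm_values big_nat_recr //=; ring.
lra.
Qed.

Lemma sum_alpha N : \sum_(0 <= k < N) alpha k = N%:R * (N%:R + 3) / (4 * L).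
Proof.
elim: N => [|N IH]; first by rewrite big_geq // !mul0r.
by rewrite big_nat_recr //= IH -natr1; field; rewrite gt_eqF.
Qed.

Lemma fgm_model_le_at_min N :
  model N xs <= N%:R * (N%:R + 3) / (4 * L) * f xs + 2^-1 * enorm (x0 - xs) ^+ 2.
Proof.
rewrite /fgm_model -sum_alpha mulr_suml lerD2r; apply: ler_sum => k _.
by rewrite ler_wpM2l ?convex_grad_le // divr_ge0 ?mulr_ge0 ?(ltW L_gt0).
Qed.

Lemma fgm_model_quadratic N u v :
  model N u - 2^-1 * enorm (Z N - u) ^+ 2 = model N v - 2^-1 * enorm (Z N - v) ^+ 2.
Proof.
elim: N u v => [|N IH] u v; first by rewrite /fgm_model !big_geq // !add0r !subrr.
have expand w : enorm (Z N.+1 - w) ^+ 2 = enorm (Z N - w) ^+ 2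
    - 2 * alpha N * dotv (gf (X N.+1)) (Z N - w) + alpha N ^+ 2 * enorm (gf (X N.+1)) ^+ 2.
  have -> : Z N.+1 - w = (Z N - w) + (- alpha N) *: gf (X N.+1).
    by rewrite fgm_zS; apply/rowP => i; rewrite !mxE; ring.
  by rewrite enorm_sqrD enorm_sqrZ sqrrN dotvZr (dotvC (Z N - w)); ring.
have split w : dotv (gf (X N.+1)) (w - X N.+1)
    = dotv (gf (X N.+1)) (Z N - X N.+1) - dotv (gf (X N.+1)) (Z N - w).
  by rewrite -dotvBr; congr dotv; apply/rowP => i; rewrite !mxE; ring.
move: (IH u v); rewrite /fgm_model !big_nat_recr //= !expand (split u) (split v).
lra.
Qed.

Lemma fgm_model_min N u : model N (Z N) <= model N u.
Proof.
have := fgm_model_quadratic N u (Z N).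
by rewrite subrr enorm0 expr0n mulr0 subr0 => <-; rewrite gerBl mulr_ge0 ?sqr_ge0.
Qed.

Lemma fgm_ybar_le_values N : (0 < N)%N ->
  N%:R * (N%:R + 3) * f (fgm_ybar L gf x0 N) <= values N.
Proof.
move=> N_gt0; pose w j : R := if j == N then (N%:R + 1) ^+ 2 else 1.
have sum_w (V : nmodType) (F : R -> nat -> V) :
    \sum_(1 <= j < N.+1) F (w j) j = \sum_(1 <= j < N) F 1 j + F ((N%:R + 1) ^+ 2) N.
  rewrite big_nat_recr //= /w eqxx; congr (_ + _).
  by apply: eq_big_nat => j /andP[_ jN]; rewrite ltn_eqF.
have sum_w1 : \sum_(1 <= j < N.+1) w j = N%:R * (N%:R + 3).
  by rewrite (sum_w _ (fun a _ => a)) sumr_const_nat natrB // -natr1; ring.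
have := convex_grad_jensen f_grad f_convex (index_iota 1 N.+1) w Y (fgm_ybar L gf x0 N).
rewrite sum_w1 (sum_w _ (fun a j => a *: Y j)) (sum_w _ (fun a j => a * f (Y j))).
have c_neq0 : N%:R * (N%:R + 3) != 0 :> R.
  by rewrite mulf_neq0 ?pnatr_eq0 -?lt0n ?gt_eqF ?ltr_wpDl.
rewrite (eq_bigr _ (fun j _ => mul1r _)) (eq_bigr _ (fun j _ => scale1r _)).
rewrite /fgm_values [_ * f (Y N) + _]addrC; apply.
  by move=> j; rewrite /w; case: eqP; rewrite ?sqr_ge0.
by rewrite /fgm_ybar scalerA mulfV // scale1r.
Qed.

Lemma fgm_yz_in_ball {k j} : (j <= k)%N -> in_ball (Y j) /\ in_ball (Z j).
Proof.
elim: k j => [|k IH] j; first by rewrite leqn0 => /eqP ->; split; exact: lexx.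
rewrite leq_eqVlt => /orP[/eqP ->|]; last exact: IH.
have values_ge : k.+1%:R * (k.+1%:R + 3) / (4 * L) * f xs <= values k.+1 / (4 * L).
  rewrite mulrAC ler_pM2r ?invr_gt0 ?mulr_gt0 //.
  apply: le_trans (fgm_ybar_le_values k.+1 isT); rewrite ler_wpM2l ?xs_min //.
have zB : in_ball (Z k.+1).
  have := fgm_values_le_model k.+1 xs isT IH.
  have := fgm_model_le_at_min k.+1.
  by rewrite enorm_leE; lra.
split => //; rewrite fgm_yS_convex; apply: ball_convex => //; first exact: tau_ge0_le1.
exact: (IH k (leqnn k)).1.
Qed.

Lemma fgm_in_ball k : in_ball (X k) /\ in_ball (Y k) /\ in_ball (Z k).
Proof.
split; last exact: fgm_yz_in_ball (leqnn k).
case: k => [|k]; first exact: lexx.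
by have [yB zB] := fgm_yz_in_ball (leqnn k); exact: fgm_xS_in_ball.
Qed.

Lemma fgm_ybar_le_model N : (0 < N)%N ->
  N%:R * (N%:R + 3) * f (fgm_ybar L gf x0 N) <= 4 * L * model N (Z N).
Proof.
move=> N_gt0; apply: le_trans (fgm_ybar_le_values N N_gt0) _.
have := fgm_values_le_model N (Z N) N_gt0 (fun j jN => fgm_yz_in_ball (ltnW jN)).
by rewrite subrr enorm0 expr0n mulr0 addr0 ler_pdivrMr ?mulr_gt0 // mulrC.
Qed.

Lemma fgm_gap_le N : (0 < N)%N ->
  N%:R * (N%:R + 3) * (f (fgm_ybar L gf x0 N) - f xs) <= 2 * L * enorm (x0 - xs) ^+ 2.
Proof.
move=> N_gt0; have model_le := le_trans (fgm_model_min N xs) (fgm_model_le_at_min N).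
have := ler_wpM2l (mulr_ge0 (ler0n _ 4) (ltW L_gt0)) model_le.
move=> /(le_trans (fgm_ybar_le_model N N_gt0)).
have -> : 4 * L * (N%:R * (N%:R + 3) / (4 * L) * f xs + 2^-1 * enorm (x0 - xs) ^+ 2)
  = N%:R * (N%:R + 3) * f xs + 2 * L * enorm (x0 - xs) ^+ 2 by field; rewrite gt_eqF.
by rewrite mulrBr; lra.
Qed.

End FastGradientMethod.

Theorem theorem1 (R : realType) (n : nat) (f : 'rV[R]_n -> R)
    (gf : 'rV[R]_n -> 'rV[R]_n) (xs x0 : 'rV[R]_n) (L : R) (N : nat) :
  convex_fun f ->
  has_gradient f gf ->
  (forall x : 'rV[R]_n, f xs <= f x) ->
  0 < L ->
  (forall x y : 'rV[R]_n, enorm (x - xs) <= enorm (x0 - xs) ->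
     enorm (y - xs) <= enorm (x0 - xs) ->
     enorm (gf y - gf x) <= L * enorm (y - x)) ->
  (1 <= N)%N ->
  (forall k : nat, (k <= N)%N ->
     enorm (fgm_x L gf x0 k - xs) <= enorm (x0 - xs) /\
     enorm (fgm_y L gf x0 k - xs) <= enorm (x0 - xs) /\
     enorm (fgm_z L gf x0 k - xs) <= enorm (x0 - xs)) /\
  (exists xm : 'rV[R]_n,
     (forall x, fgm_model f L gf x0 N xm <= fgm_model f L gf x0 N x) /\
     f (fgm_ybar L gf x0 N)
       <= 4 * L / (N%:R * (N%:R + 3)) * fgm_model f L gf x0 N xm) /\
  f (fgm_ybar L gf x0 N) - f xs
    <= 2 * L * enorm (fgm_z L gf x0 0 - xs) ^+ 2 / (N%:R * (N%:R + 3)) /\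
  2 * L * enorm (fgm_z L gf x0 0 - xs) ^+ 2 / (N%:R * (N%:R + 3))
    <= 2 * L * enorm (x0 - xs) ^+ 2 / (N%:R + 1) ^+ 2.
Proof.
move=> f_convex f_grad xs_min L_gt0 grad_lip N_gt0.
have c_gt0 : 0 < N%:R * (N%:R + 3) :> R by rewrite mulr_gt0 ?ltr0n ?ltr_wpDl.
split; first by move=> k _; exact: (fgm_in_ball f_convex f_grad xs_min L_gt0 grad_lip).
split.
  exists (fgm_z L gf x0 N); split; first exact: fgm_model_min.
  rewrite mulrAC ler_pdivlMr // mulrC.
  exact: (fgm_ybar_le_model f_convex f_grad xs_min L_gt0 grad_lip).
split.
  rewrite ler_pdivlMr // mulrC.
  exact: (fgm_gap_le f_convex f_grad xs_min L_gt0 grad_lip).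
have N1_le : (N%:R + 1) ^+ 2 <= N%:R * (N%:R + 3) :> R.
  have N_ge1 : 1 <= N%:R :> R by rewrite ler1n.
  nra.
apply: ler_wpM2l; first by rewrite mulr_ge0 ?sqr_ge0 // mulr_ge0 // ltW.
have sqr_gt0 : 0 < (N%:R + 1) ^+ 2 :> R by rewrite exprn_gt0 // ltr_wpDl.
by rewrite lef_pV2 ?posrE.
Qed.
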